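(* Let $E/\mathbb{F}_q$, $r\ge2$, $\mathcal{G}$, $F=E^{\mathcal{G}}$, the places $Q_0,\dots,Q_s$, $P_{u,v}$, and the functions $z,\omega_0,\dots,\omega_{r-1}$ be as in the context, and let $1\le t\le s$. For $\mathbf a=(a_{i,j})$ let $$f_{\mathbf a}=\sum_{j=1}^{t}a_{0,j}z^{j-1}+\sum_{i=1}^{r-1}\Big(\sum_{j=1}^{t-1}a_{i,j}z^{j-1}\Big)\omega_i\in V_E .$$ Fix $u\in\{1,\dots,s\}$ and suppose that every $r\times r$ submatrix of $M_u$ is invertible and every $(r-1)\times(r-1)$ submatrix of the $(r+1)\times(r-1)$ matrix $M'_u=(\omega_i(P_{u,v}))_{1\le v\le r+1,\,1\le i\le r-1}$ is invertible. For $f_{\mathbf a}\in V_E$ consider the vector $$B_u(\mathbf a)=\Big(f_{\mathbf a}(P_{u,1}),\dots,f_{\mathbf a}(P_{u,r+1}),\ \sum_{j=1}^ta_{0,j}z(Q_u)^{j-1}\Big)\in\mathbb{F}_q^{r+2}.$$ Then for any two positions of $B_u(\mathbf a)$, the entries in these two positions are uniquely determined by the remaining $r$ entries; that is, if $B_u(\mathbf a)$ and $B_u(\mathbf b)$ agree in $r$ positions, they agree everywhere.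
   Context: $E/\mathbb{F}_q$ is an elliptic function field with full constant field $\mathbb{F}_q$; $\mathcal{G}\subseteq\mathrm{Aut}(E/\mathbb{F}_q)$ is a subgroup of order $r+1$ with fixed field $F=E^{\mathcal{G}}$ a rational function field; $Q_0,Q_1,\dots,Q_s$ are distinct rational places of $F$ splitting completely in $E/F$, and $P_{u,1},\dots,P_{u,r+1}$ are the places of $E$ over $Q_u$. $z\in F$ satisfies $F=\mathbb{F}_q(z)$ and $(z)_\infty=P_{0,1}+\cdots+P_{0,r+1}$ in $E$; $\omega_0=1$ and $\omega_1,\dots,\omega_{r-1}\in E$ satisfy $(\omega_i)_\infty=P_{0,1}+\cdots+P_{0,i+1}$ and $\omega_0,\dots,\omega_{r-1}$ are linearly independent over $F$. $M_u$ is the $(r+1)\times r$ matrix $(\omega_i(P_{u,v}))_{1\le v\le r+1,\,0\le i\le r-1}$. $V_E$ is the $\mathbb{F}_q$-space of all $f_{\mathbf a}$ as displayed, of dimension $rt-r+1$. *)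

(* Abstract model of an algebraic function field E over a
   finite field K = F_q: places are normalized discrete valuations of E
   trivial on K; rational places additionally carry their residue map. *)
From HB Require Import structures.
From mathcomp Require Import all_boot all_order all_algebra.
Set Implicit Arguments. Unset Strict Implicit. Unset Printing Implicit Defensive.
Import Order.TTheory GRing.Theory Num.Theory.
Local Open Scope ring_scope.

Section FunctionFieldDefs.
Variables (K : finFieldType) (E : fieldType) (cst : {rmorphism K -> E}).

Definition allE : E -> Prop := fun _ => True.

(* x is regular (in the valuation ring) for ord; ord 0 is irrelevant *)
Definition regular (ord : E -> int) (x : E) : Prop := x = 0 \/ 0 <= ord x.

Definition is_place_on (S : E -> Prop) (ord : E -> int) : Prop :=
  [/\ (forall x y, S x -> S y -> x != 0 -> y != 0 -> ord (x * y) = ord x + ord y),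
      (forall x y, S x -> S y -> x != 0 -> y != 0 -> x + y != 0 ->
         Num.min (ord x) (ord y) <= ord (x + y)),
      (forall c, c != 0 -> ord (cst c) = 0) &
      (exists w, [/\ S w, w != 0 & ord w = 1])].

Definition is_rat_place_on (S : E -> Prop) (ord : E -> int) (ev : E -> K) : Prop :=
  [/\ is_place_on S ord,
      (forall c, ev (cst c) = c),
      (forall x y, S x -> S y -> regular ord x -> regular ord y ->
         ev (x + y) = ev x + ev y /\ ev (x * y) = ev x * ev y) &
      (forall x, S x -> regular ord x -> (ev x = 0 <-> (x = 0 \/ 0 < ord x)))].

Definition same_place_on (S : E -> Prop) (o1 o2 : E -> int) : Prop :=
  forall x, S x -> x != 0 -> o1 x = o2 x.

Definition lies_over (S : E -> Prop) (oP oQ : E -> int) : Prop :=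
  forall x, S x -> x != 0 -> (0 <= oP x <-> 0 <= oQ x).

Definition full_constant_field : Prop :=
  forall x : E, (exists p : {poly K}, p != 0 /\ root (map_poly cst p) x) ->
    exists c, x = cst c.

Definition Lspace (oP : E -> int) (n : nat) (x : E) : Prop :=
  x = 0 \/ ((- (n%:Z) <= oP x) /\
     forall o, is_place_on allE o -> ~ same_place_on allE o oP -> 0 <= o x).

Definition dimK (L : E -> Prop) (n : nat) : Prop :=
  exists b : 'I_n -> E,
    [/\ (forall i, L (b i)),
        (forall c : 'I_n -> K, \sum_i cst (c i) * b i = 0 -> forall i, c i = 0) &
        (forall x, L x -> exists c : 'I_n -> K, x = \sum_i cst (c i) * b i)].

(* genus one (with a rational place P): l(nP) = n for all n >= 1 *)
Definition elliptic : Prop :=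
  exists oP evP, is_rat_place_on allE oP evP /\
    forall n, (1 <= n)%N -> dimK (Lspace oP n) n.

Definition is_Kaut (g : E -> E) : Prop :=
  [/\ (forall x y, g (x + y) = g x + g y),
      (forall x y, g (x * y) = g x * g y),
      bijective g &
      (forall c, g (cst c) = cst c)].

Definition aut_subgroup (G : nat -> E -> E) (n : nat) : Prop :=
  [/\ (forall k, (k < n)%N -> is_Kaut (G k)),
      (forall k l, (k < n)%N -> (l < n)%N -> k <> l -> exists x, G k x <> G l x) &
      (forall k l, (k < n)%N -> (l < n)%N ->
         exists m, (m < n)%N /\ forall x, G k (G l x) = G m x)].

Definition fixed_field (G : nat -> E -> E) (n : nat) (x : E) : Prop :=
  forall k, (k < n)%N -> G k x = x.

Definition rational_generator (F : E -> Prop) (z : E) : Prop :=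
  F z /\ forall x, F x -> exists p q : {poly K},
    (map_poly cst q).[z] != 0 /\ x = (map_poly cst p).[z] / (map_poly cst q).[z].

Definition pole_divisor (o : nat -> E -> int) (vs : seq nat) (x : E) : Prop :=
  [/\ x != 0,
      (forall v, v \in vs -> o v x = -1) &
      (forall o', is_place_on allE o' -> (forall v, v \in vs -> ~ same_place_on allE o' (o v)) ->
         0 <= o' x)].

Definition fa (z : E) (omega : nat -> E) (r t : nat) (a : nat -> nat -> K) : E :=
  \sum_(1 <= j < t.+1) cst (a 0%N j) * z ^+ j.-1
  + \sum_(1 <= i < r) (\sum_(1 <= j < t) cst (a i j) * z ^+ j.-1) * omega i.

(* B_u(a), positions 0..r+1 (position k < r+1 is f_a(P_{u,k+1})) *)
Definition Bvec (evP : nat -> nat -> E -> K) (evQ : nat -> E -> K) (z : E)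
  (omega : nat -> E) (r t u : nat) (a : nat -> nat -> K) : 'I_(r.+2) -> K :=
  fun k => if (k < r.+1)%N then evP u k.+1 (fa z omega r t a)
           else \sum_(1 <= j < t.+1) a 0%N j * (evQ u z) ^+ j.-1.

End FunctionFieldDefs.

Definition Mmat (K : finFieldType) (E : fieldType) (evP : nat -> nat -> E -> K)
  (omega : nat -> E) (r u : nat) : 'M[K]_(r.+1, r) :=
  \matrix_(v < r.+1, i < r) evP u v.+1 (omega i).
Definition Mmat' (K : finFieldType) (E : fieldType) (evP : nat -> nat -> E -> K)
  (omega : nat -> E) (r u : nat) : 'M[K]_(r.+1, r.-1) :=
  \matrix_(v < r.+1, i < r.-1) evP u v.+1 (omega i.+1).
Arguments Bvec [K E] cst evP evQ z omega r t u a _.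

From HB Require Import structures.
From mathcomp Require Import all_boot all_order all_algebra.
From mathcomp Require Import zify.
Import Order.TTheory GRing.Theory Num.Theory.
Local Open Scope ring_scope.
Set Implicit Arguments. Unset Strict Implicit.

(** Evaluating [f_a] at a place [P_{u,v}] above [Q_u] gives
    [sum_i g_i(z(Q_u)) * omega_i(P_{u,v})], where [g_i] is the coefficient of
    [omega_i] in [f_a]: [z] lies in [F] and [P_{u,v}] lies over [Q_u], so [z] has
    value [z(Q_u)] there, and the [omega_i] are regular there because all their
    poles lie over [Q_0 <> Q_u].  Hence [B_u(a) = A c(a)], where [A] is [M_u] with
    the extra row [(1, 0, ..., 0)] and [c(a) = (g_i(z(Q_u)))_i].  If the [r] known
    entries avoid the extra row, they come from an invertible minor of [M_u].
    Otherwise the extra row fixes [c(a)_0], and the other [r - 1] rows, restricted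
    to the remaining coordinates, form an invertible minor of [M'_u].  Either way
    [c(a)], hence all of [B_u(a)], is determined. *)

(* [f_a = sum_i (fa_coef t a z i) * omega_i], with [cst] applied to the [a i j]. *)
Definition fa_coef (R : pzSemiRingType) (t : nat) (a : nat -> nat -> R) (c : R) (i : nat) : R :=
  \sum_(1 <= j < (if i == 0%N then t.+1 else t)) a i j * c ^+ j.-1.

Definition fa_coords (R : pzSemiRingType) (t : nat) (a : nat -> nat -> R) (c : R) (r : nat) :
  'cV[R]_r := \col_(i < r) fa_coef t a c i.

Section FunctionField.
Variables (K : finFieldType) (E : fieldType) (cst : {rmorphism K -> E}).

Definition div_closed (S : E -> Prop) : Prop :=
  [/\ S 1, forall x y, S x -> S y -> S (x * y) & forall x, S x -> S x^-1].

Lemma div_closed_allE : div_closed (@allE E).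
Proof. by []. Qed.

Section Place.
Variables (S : E -> Prop) (o : E -> int).
Hypotheses (divS : div_closed S) (o_place : is_place_on cst S o).

Lemma div_closedX x n : S x -> S (x ^+ n).
Proof.
have [S1 SM _] := divS.
by move=> Sx; elim: n => [|n IHn]; rewrite ?expr0 // exprS; apply: SM.
Qed.

Lemma div_closedXz x (n : int) : S x -> S (x ^ n).
Proof.
have [_ _ SV] := divS.
by move=> Sx; case: n => n; [apply: div_closedX | apply/SV/div_closedX].
Qed.

Lemma place_ord1 : o 1 = 0.
Proof.
have [S1 _ _] := divS; have [oM _ _ _] := o_place.
by have := oM 1 1 S1 S1 (oner_neq0 _) (oner_neq0 _); rewrite mulr1; lia.
Qed.

Lemma place_ordV x : S x -> x != 0 -> o x^-1 = - o x.
Proof.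
have [_ _ SV] := divS; have [oM _ _ _] := o_place.
move=> Sx x0; have := oM x x^-1 Sx (SV x Sx) x0 (invr_neq0 x0).
by rewrite mulfV // place_ord1; lia.
Qed.

Lemma place_ordX x n : S x -> x != 0 -> o (x ^+ n) = n%:Z * o x.
Proof.
have [oM _ _ _] := o_place.
move=> Sx x0; elim: n => [|n IHn]; first by rewrite expr0 place_ord1 mul0r.
rewrite exprS oM ?expf_neq0 //; last exact: div_closedX.
by rewrite IHn intS mulrDl mul1r.
Qed.

Lemma place_ordXz x (n : int) : S x -> x != 0 -> o (x ^ n) = n * o x.
Proof.
move=> Sx x0; case: n => n; first exact: place_ordX.
change (o (x ^+ n.+1)^-1 = Negz n * o x).
by rewrite place_ordV ?expf_neq0 ?place_ordX ?NegzE ?mulNr //; apply: div_closedX.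
Qed.

End Place.

Lemma ord_eq0_transfer (S1 S2 : E -> Prop) (o1 o2 : E -> int) :
  div_closed S1 -> div_closed S2 -> (forall y, S1 y -> S2 y) ->
  is_place_on cst S1 o1 -> is_place_on cst S2 o2 ->
  (forall y, S1 y -> y != 0 -> 0 <= o1 y -> 0 <= o2 y) ->
  forall x, S1 x -> x != 0 -> o1 x = 0 -> o2 x = 0.
Proof.
move=> divS1 divS2 S12 o1P o2P le12 x S1x x0 o1x.
have [_ _ S1V] := divS1.
have := le12 x S1x x0; have := le12 _ (S1V x S1x) (invr_neq0 x0).
by rewrite (place_ordV divS1 o1P) // (place_ordV divS2 o2P (S12 _ S1x)) // o1x; lia.
Qed.

Lemma ord_uniformizer_scale (S : E -> Prop) (o1 o2 : E -> int) (w : E) :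
  div_closed S -> is_place_on cst S o1 -> is_place_on cst S o2 ->
  (forall x, S x -> x != 0 -> o1 x = 0 -> o2 x = 0) ->
  S w -> w != 0 -> o1 w = 1 ->
  forall x, S x -> x != 0 -> o2 x = o1 x * o2 w.
Proof.
move=> divS o1P o2P eq0_12 Sw w0 o1w x Sx x0.
have [_ SM _] := divS; have [o1M _ _ _] := o1P; have [o2M _ _ _] := o2P.
(* [x * w ^ (- o1 x)] is an [o1]-unit, hence an [o2]-unit. *)
have Swn : S (w ^ (- o1 x)) by apply: div_closedXz.
have wn0 : w ^ (- o1 x) != 0 by rewrite expfz_neq0.
have := eq0_12 _ (SM _ _ Sx Swn) (mulf_neq0 x0 wn0).
rewrite o1M ?o2M // !(place_ordXz divS) // o1w mulr1 addrN => /(_ erefl) /eqP.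
by rewrite addr_eq0 mulNr opprK => /eqP.
Qed.

Lemma same_place_of_nonneg_iff (S : E -> Prop) (o1 o2 : E -> int) :
  div_closed S -> is_place_on cst S o1 -> is_place_on cst S o2 ->
  (forall x, S x -> x != 0 -> (0 <= o1 x <-> 0 <= o2 x)) ->
  same_place_on S o1 o2.
Proof.
move=> divS o1P o2P iff12.
have eq0_12 := ord_eq0_transfer divS divS (fun _ Sy => Sy) o1P o2P
  (fun y Sy y0 => (iff12 y Sy y0).1).
have [_ _ _ [w1 [Sw1 w10 o1w1]]] := o1P; have [_ _ _ [w2 [Sw2 w20 o2w2]]] := o2P.
have scale12 := ord_uniformizer_scale divS o1P o2P eq0_12 Sw1 w10 o1w1.
have o2w1 : 0 <= o2 w1 by apply/(iff12 _ Sw1 w10); rewrite o1w1.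
have o1w2 : 0 < o1 w2.
  rewrite lt0r; apply/andP; split; last by apply/(iff12 _ Sw2 w20); rewrite o2w2.
  by apply/eqP => /(eq0_12 _ Sw2 w20); rewrite o2w2.
have := scale12 _ Sw2 w20; rewrite o2w2 => unit_prod.
have {unit_prod} o2w1_1 : o2 w1 = 1 by nia.
by move=> x Sx x0; rewrite scale12 // o2w1_1 mulr1.
Qed.

Lemma lies_over_ord_gt0 (F : E -> Prop) (oP oQ : E -> int) :
  div_closed F -> is_place_on cst (@allE E) oP -> is_place_on cst F oQ ->
  lies_over F oP oQ -> forall x, F x -> x != 0 -> 0 < oP x -> 0 < oQ x.
Proof.
move=> divF oPP oQP PoverQ x Fx x0 oPx.
have eq0_QP := ord_eq0_transfer divF div_closed_allE (fun _ _ => I) oQP oPP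
  (fun y Fy y0 => (PoverQ y Fy y0).2).
rewrite lt0r; apply/andP; split; last by apply/(PoverQ x Fx x0); lia.
by apply/eqP => /(eq0_QP x Fx x0); lia.
Qed.

Lemma same_place_below (F : E -> Prop) (oP1 oP2 oQ1 oQ2 : E -> int) :
  div_closed F -> is_place_on cst F oQ1 -> is_place_on cst F oQ2 ->
  lies_over F oP1 oQ1 -> lies_over F oP2 oQ2 ->
  same_place_on (@allE E) oP1 oP2 -> same_place_on F oQ1 oQ2.
Proof.
move=> divF oQ1P oQ2P over1 over2 samePs.
apply: same_place_of_nonneg_iff => // x Fx x0.
by rewrite -(over1 x Fx x0) (samePs x I x0) (over2 x Fx x0).
Qed.

Section RationalPlace.
Variables (o : E -> int) (ev : E -> K).
Hypothesis ev_rat : is_rat_place_on cst (@allE E) o ev.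

Definition has_value (x : E) (c : K) : Prop := regular o x /\ ev x = c.

Lemma has_value_cst c : has_value (cst c) c.
Proof.
have [[_ _ o_cst _] ev_cst _ _] := ev_rat; split; last exact: ev_cst.
by have [->|c0] := eqVneq c 0; [left; rewrite rmorph0 | right; rewrite o_cst].
Qed.

Lemma has_valueD x y c d : has_value x c -> has_value y d -> has_value (x + y) (c + d).
Proof.
have [[_ o_add _ _] _ ev_ring _] := ev_rat.
move=> [x_reg <-] [y_reg <-]; split; last by have [] := ev_ring x y I I x_reg y_reg.
have [->|x0] := eqVneq x 0; first by rewrite add0r.
have [->|y0] := eqVneq y 0; first by rewrite addr0.
have [->|xy0] := eqVneq (x + y) 0; [by left | right].
case: x_reg y_reg => [/eqP|ox]; first by rewrite (negbTE x0).
case=> [/eqP|oy]; first by rewrite (negbTE y0).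
by have := o_add x y I I x0 y0 xy0; case: leP; lia.
Qed.

Lemma has_valueM x y c d : has_value x c -> has_value y d -> has_value (x * y) (c * d).
Proof.
have [[o_mul _ _ _] _ ev_ring _] := ev_rat.
move=> [x_reg <-] [y_reg <-]; split; last by have [] := ev_ring x y I I x_reg y_reg.
have [->|x0] := eqVneq x 0; first by rewrite mul0r; left.
have [->|y0] := eqVneq y 0; first by rewrite mulr0; left.
case: x_reg y_reg => [/eqP|ox]; first by rewrite (negbTE x0).
case=> [/eqP|oy]; first by rewrite (negbTE y0).
by right; rewrite o_mul //; lia.
Qed.

Lemma has_valueX x c n : has_value x c -> has_value (x ^+ n) (c ^+ n).
Proof.
move=> xc; elim: n => [|n IHn]; last by rewrite !exprS; apply: has_valueM.
by rewrite !expr0 -(rmorph1 cst); apply: has_value_cst.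
Qed.

Lemma has_value_sum (I : eqType) (r : seq I) (P : pred I) (x : I -> E) (c : I -> K) :
  (forall i, i \in r -> P i -> has_value (x i) (c i)) ->
  has_value (\sum_(i <- r | P i) x i) (\sum_(i <- r | P i) c i).
Proof.
move=> xc; rewrite big_seq_cond [X in has_value _ X]big_seq_cond.
apply: big_ind2 => [|? ? ? ?|i /andP[]]; [|exact: has_valueD|exact: xc].
by rewrite -(rmorph0 cst); apply: has_value_cst.
Qed.

Lemma has_value_fa (z : E) (omega : nat -> E) (r t : nat) (a : nat -> nat -> K) :
  (0 < r)%N -> omega 0%N = 1 -> regular o z ->
  (forall i, (i < r)%N -> regular o (omega i)) ->
  has_value (fa cst z omega r t a) (\sum_(i < r) fa_coef t a (ev z) i * ev (omega i)).
Proof.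
move=> r0 omega0 z_reg omega_reg.
have coef_value i n : has_value (\sum_(1 <= j < n) cst (a i j) * z ^+ j.-1)
                                (\sum_(1 <= j < n) a i j * ev z ^+ j.-1).
  by apply: has_value_sum => j _ _; apply/has_valueM/has_valueX; [apply: has_value_cst|].
have ev1 : ev 1 = 1 by rewrite -(rmorph1 cst); case: (has_value_cst 1).
rewrite -(big_mkord xpredT (fun i => fa_coef t a (ev z) i * ev (omega i))).
rewrite (big_ltn r0) /fa_coef eqxx omega0 ev1 mulr1; apply: has_valueD => //.
apply: has_value_sum => i; rewrite mem_index_iota => /andP[i1 ir] _.
by rewrite ifN -?lt0n //; apply: has_valueM => //; split => //; apply: omega_reg.
Qed.

End RationalPlace.

Lemma ev_lies_over (F : E -> Prop) (oP oQ : E -> int) (evP evQ : E -> K) (x : E) :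
  div_closed F -> (forall c, F (cst c)) -> (forall x y, F x -> F y -> F (x + y)) ->
  is_rat_place_on cst (@allE E) oP evP -> is_rat_place_on cst F oQ evQ ->
  lies_over F oP oQ -> F x -> regular oP x -> evP x = evQ x.
Proof.
move=> divF F_cst F_add P_rat Q_rat PoverQ Fx x_reg.
have [Q_place evQ_cst evQ_ring evQ_eq0] := Q_rat.
set c := evP x; pose y := x + cst (- c).
have Fy : F y by apply: F_add.
have [y0|y_neq0] := eqVneq y 0.
  by move/eqP: y0; rewrite /y rmorphN addr_eq0 opprK => /eqP ->; rewrite evQ_cst.
have [y_reg evPy] : has_value oP evP y 0.
  by rewrite -(subrr c); apply: has_valueD => //; apply: has_value_cst.
have oPy : 0 < oP y.
  have [_ _ _ evP_eq0] := P_rat.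
  by case: ((evP_eq0 y I y_reg).1 evPy) => // /eqP; rewrite (negbTE y_neq0).
have [P_place _ _ _] := P_rat.
have oQy := lies_over_ord_gt0 divF P_place Q_place PoverQ Fy y_neq0 oPy.
have xQ_reg : regular oQ x.
  have [->|x0] := eqVneq x 0; [by left | right].
  by case: x_reg => [/eqP|]; [rewrite (negbTE x0) | apply: (PoverQ x Fx x0).1].
have cQ_reg : regular oQ (cst (- c)).
  have [_ _ Q_cst _] := Q_place.
  by have [->|c0] := eqVneq (- c) 0; [left; rewrite rmorph0 | right; rewrite Q_cst].
have := (evQ_eq0 y Fy (or_intror (ltW oQy))).2 (or_intror oQy).
rewrite (evQ_ring _ _ Fx (F_cst _) xQ_reg cQ_reg).1 evQ_cst.
by move/eqP; rewrite addr_eq0 opprK => /eqP.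
Qed.

Section Automorphism.
Variable g : E -> E.
Hypothesis g_aut : is_Kaut cst g.

Lemma Kaut0 : g 0 = 0.
Proof. by have [g_add _ _ _] := g_aut; apply: (addIr (g 0)); rewrite -g_add !add0r. Qed.

Lemma Kaut1 : g 1 = 1.
Proof. by have [_ _ _ g_cst] := g_aut; rewrite -(rmorph1 cst) g_cst. Qed.

Lemma KautV x : g x^-1 = (g x)^-1.
Proof.
have [_ g_mul _ _] := g_aut.
have [->|x0] := eqVneq x 0; first by rewrite invr0 Kaut0 invr0.
have gxV : g x * g x^-1 = 1 by rewrite -g_mul mulfV // Kaut1.
have gx0 : g x != 0 by apply: contra_eq_neq gxV => ->; rewrite mul0r eq_sym oner_neq0.
by rewrite -[LHS]mul1r -(mulVf gx0) -mulrA gxV mulr1.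
Qed.

End Automorphism.

Section FixedField.
Variables (G : nat -> E -> E) (n : nat).
Hypothesis G_aut : forall k, (k < n)%N -> is_Kaut cst (G k).

Lemma fixed_field_div_closed : div_closed (fixed_field G n).
Proof.
split=> [k kn|x y Fx Fy k kn|x Fx k kn]; first exact: Kaut1 (G_aut kn).
- by have [_ G_mul _ _] := G_aut kn; rewrite G_mul Fx ?Fy.
- by rewrite (KautV (G_aut kn)) Fx.
Qed.

Lemma fixed_field_cst c : fixed_field G n (cst c).
Proof. by move=> k kn; have [_ _ _ G_cst] := G_aut kn. Qed.

Lemma fixed_field_add x y : fixed_field G n x -> fixed_field G n y -> fixed_field G n (x + y).
Proof. by move=> Fx Fy k kn; have [G_add _ _ _] := G_aut kn; rewrite G_add Fx ?Fy. Qed.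

End FixedField.

End FunctionField.

Lemma det_rowsub_mulmx_eq0 (F : fieldType) m n (M : 'M[F]_(m, n)) (f : 'I_n -> 'I_m)
    (d : 'cV_n) :
  \det (rowsub f M) != 0 -> (forall j, (M *m d) (f j) 0 = 0) -> d = 0.
Proof.
move=> detM0 Md0; have Munit : rowsub f M \in unitmx by rewrite unitmxE unitfE.
have Mfd0 : rowsub f M *m d = 0.
  by rewrite mul_rowsub_mx; apply/matrixP => j k; rewrite ord1 mxE Md0 mxE.
by rewrite -(mulKmx Munit d) Mfd0 mulmx0.
Qed.

Lemma mulmx_col'0 (R : pzRingType) m n (M : 'M[R]_(m, n.+1)) (d : 'cV_(n.+1)) :
  d 0 0 = 0 -> M *m d = col' 0 M *m row' 0 d.
Proof.
move=> d00; apply/matrixP => i k; rewrite !mxE big_ord_recl ord1 d00 mulr0 add0r.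
by apply: eq_bigr => j _; rewrite !mxE.
Qed.

Lemma lift_max_enum n k (S : {set 'I_n.+1}) :
  #|S :\ ord_max| = k ->
  exists f : 'I_k -> 'I_n, injective f /\ forall j, lift ord_max (f j) \in S.
Proof.
pose T := [set i | lift ord_max i \in S].
have liftT : lift ord_max @: T = S :\ ord_max.
  apply/setP => i; rewrite !inE; case: (unliftP ord_max i) => [j ->|->].
    by rewrite (mem_imset _ _ (@lift_inj _ ord_max)) inE eq_sym neq_lift.
  by rewrite eqxx; apply/negbTE/imsetP => -[j _] /eqP; rewrite (negbTE (neq_lift _ _)).
move=> cardS; have cardT : #|T| = k by rewrite -(card_imset _ (@lift_inj _ ord_max)) liftT.
exists (fun j => enum_val (cast_ord (esym cardT) j)); split.
  by move=> j1 j2 /enum_val_inj /cast_ord_inj.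
by move=> j; have := enum_valP (cast_ord (esym cardT) j); rewrite inE.
Qed.

(* The extended matrix is [M] with one more row [(1, 0, ..., 0)], indexed by
   [ord_max]; [S] selects [n.+1] of its rows. *)
Lemma eq_of_ext_rows (F : fieldType) n (M : 'M[F]_(n.+2, n.+1)) (x y : 'cV_(n.+1))
    (S : {set 'I_n.+3}) :
  (forall f : 'I_n.+1 -> 'I_n.+2, injective f -> \det (rowsub f M) != 0) ->
  (forall f : 'I_n -> 'I_n.+2, injective f -> \det (rowsub f (col' 0 M)) != 0) ->
  #|S| = n.+1 ->
  (forall k, lift ord_max k \in S -> (M *m x) k 0 = (M *m y) k 0) ->
  (ord_max \in S -> x 0 0 = y 0 0) ->
  x = y.
Proof.
move=> M_minors M'_minors cardS Mxy xy0; apply/eqP; rewrite -subr_eq0; apply/eqP.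
set d := x - y.
have Md0 k : lift ord_max k \in S -> (M *m d) k 0 = 0.
  have -> : (M *m d) k 0 = (M *m x) k 0 - (M *m y) k 0 by rewrite mulmxBr !mxE.
  by move=> kS; rewrite Mxy // subrr.
have := cardsD1 ord_max S; rewrite cardS; case: (boolP (ord_max \in S)) => maxS cardS'.
- have d00 : d 0 0 = 0 by rewrite !mxE xy0 // subrr.
  have [f [f_inj fS]] := lift_max_enum (esym (succn_inj cardS')).
  have d'0 : row' 0 d = 0.
    apply: det_rowsub_mulmx_eq0 (M'_minors f f_inj) _ => j.
    by rewrite -mulmx_col'0 // Md0.
  apply/matrixP => i k; rewrite ord1 [RHS]mxE; case: (unliftP 0 i) => [i' ->|->] //.
  by have := congr1 (fun v : 'cV_n => v i' 0) d'0; rewrite !mxE.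
- have [f [f_inj fS]] := lift_max_enum (esym cardS').
  by apply: det_rowsub_mulmx_eq0 (M_minors f f_inj) _ => j; rewrite Md0.
Qed.

Lemma Mmat'E (K : finFieldType) (E : fieldType) (evP : nat -> nat -> E -> K)
    (omega : nat -> E) (r u : nat) :
  Mmat' evP omega r.+1 u = col' 0 (Mmat evP omega r.+1 u).
Proof. by apply/matrixP => v i; rewrite !mxE. Qed.

Section PlacesOverQu.
Variables (K : finFieldType) (E : fieldType) (cst : {rmorphism K -> E}).
Variables (r s t : nat) (G : nat -> E -> E) (ordQ : nat -> E -> int) (evQ : nat -> E -> K).
Variables (ordP : nat -> nat -> E -> int) (evP : nat -> nat -> E -> K).
Variables (z : E) (omega : nat -> E) (u : nat).
Let F := fixed_field G r.+1.
Hypotheses (G_aut : forall k, (k < r.+1)%N -> is_Kaut cst (G k)) (Fz : F z).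
Hypotheses (u_le_s : (u <= s)%N) (r_gt0 : (0 < r)%N).
Hypothesis Q_rat : forall u', (u' <= s)%N -> is_rat_place_on cst F (ordQ u') (evQ u').
Hypothesis Qu_neq_Q0 : ~ same_place_on F (ordQ u) (ordQ 0%N).
Hypothesis P_over : forall u' v, (u' <= s)%N -> (1 <= v <= r.+1)%N ->
  is_rat_place_on cst (@allE E) (ordP u' v) (evP u' v) /\ lies_over F (ordP u' v) (ordQ u').
Hypothesis z_poles : pole_divisor cst (ordP 0%N) (iota 1 r.+1) z.
Hypothesis omega0 : omega 0%N = 1.
Hypothesis omega_poles :
  forall i, (1 <= i <= r.-1)%N -> pole_divisor cst (ordP 0%N) (iota 1 i.+1) (omega i).

Lemma Pu_neq_P0 v w : (1 <= v <= r.+1)%N -> (1 <= w <= r.+1)%N ->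
  ~ same_place_on (@allE E) (ordP u v) (ordP 0%N w).
Proof.
move=> v_range w_range samePs; apply: Qu_neq_Q0.
have [[_ Pu_over] [_ P0_over]] := (P_over u_le_s v_range, P_over (leq0n s) w_range).
have [[Qu_place _ _ _] [Q0_place _ _ _]] := (Q_rat u_le_s, Q_rat (leq0n s)).
exact: (same_place_below (fixed_field_div_closed G_aut) Qu_place Q0_place Pu_over P0_over).
Qed.

Lemma regular_over_Qu (x : E) (n : nat) v : (n <= r)%N -> (1 <= v <= r.+1)%N ->
  pole_divisor cst (ordP 0%N) (iota 1 n.+1) x -> regular (ordP u v) x.
Proof.
move=> n_le_r v_range [_ _ x_poles]; have [[P_place _ _ _] _] := P_over u_le_s v_range.
right; apply: x_poles P_place _ => w; rewrite mem_iota => w_range.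
by apply: Pu_neq_P0 => //; apply/andP; lia.
Qed.

Lemma evP_z v : (1 <= v <= r.+1)%N -> evP u v z = evQ u z.
Proof.
move=> v_range; have [P_rat Pu_over] := P_over u_le_s v_range.
apply: (ev_lies_over (fixed_field_div_closed G_aut) (fixed_field_cst G_aut)
  (fixed_field_add G_aut) P_rat (Q_rat u_le_s) Pu_over Fz).
exact: regular_over_Qu z_poles.
Qed.

Lemma Bvec_lift (a : nat -> nat -> K) (k : 'I_r.+1) :
  Bvec cst evP evQ z omega r t u a (lift ord_max k) =
  (Mmat evP omega r u *m fa_coords t a (evQ u z) r) k 0.
Proof.
have k_range : (1 <= k.+1 <= r.+1)%N by exact: ltn_ord.
have [P_rat _] := P_over u_le_s k_range.
have omega_reg i : (i < r)%N -> regular (ordP u k.+1) (omega i).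
  case: i => [|i] i_lt_r; first by rewrite omega0 -(rmorph1 cst); case: (has_value_cst P_rat 1).
  have i_range : (1 <= i.+1 <= r.-1)%N by apply/andP; lia.
  exact: regular_over_Qu (ltnW i_lt_r) k_range (omega_poles i_range).
rewrite /Bvec lift_max ltn_ord.
have z_reg := regular_over_Qu (leqnn r) k_range z_poles.
rewrite (has_value_fa P_rat t a r_gt0 omega0 z_reg omega_reg).2.
by rewrite evP_z // !mxE; apply: eq_bigr => i _; rewrite !mxE mulrC.
Qed.

End PlacesOverQu.

Lemma Bvec_max (K : finFieldType) (E : fieldType) (cst : {rmorphism K -> E})
    (evP : nat -> nat -> E -> K) (evQ : nat -> E -> K) (z : E) (omega : nat -> E)
    (r t u : nat) (a : nat -> nat -> K) :
  Bvec cst evP evQ z omega r t u a ord_max = fa_coef t a (evQ u z) 0.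
Proof. by rewrite /Bvec /= ltnn /fa_coef eqxx. Qed.

Unset Implicit Arguments.

Theorem mainTheorem8 (K : finFieldType) (E : fieldType) (cst : {rmorphism K -> E})
  (r s t : nat) (G : nat -> E -> E)
  (ordQ : nat -> E -> int) (evQ : nat -> E -> K)
  (ordP : nat -> nat -> E -> int) (evP : nat -> nat -> E -> K)
  (z : E) (omega : nat -> E) (u : nat) :
  (2 <= r)%N ->
  full_constant_field cst ->
  elliptic cst ->
  aut_subgroup cst G r.+1 ->
  rational_generator cst (fixed_field G r.+1) z ->
  (forall u', (u' <= s)%N -> is_rat_place_on cst (fixed_field G r.+1) (ordQ u') (evQ u')) ->
  (forall u1 u2, (u1 <= s)%N -> (u2 <= s)%N -> u1 <> u2 ->
     ~ same_place_on (fixed_field G r.+1) (ordQ u1) (ordQ u2)) ->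
  (forall u' v, (u' <= s)%N -> (1 <= v <= r.+1)%N ->
     is_rat_place_on cst (@allE E) (ordP u' v) (evP u' v) /\
     lies_over (fixed_field G r.+1) (ordP u' v) (ordQ u')) ->
  (forall u' v1 v2, (u' <= s)%N -> (1 <= v1 <= r.+1)%N -> (1 <= v2 <= r.+1)%N ->
     v1 <> v2 -> ~ same_place_on (@allE E) (ordP u' v1) (ordP u' v2)) ->
  (forall u' o, (u' <= s)%N -> is_place_on cst (@allE E) o ->
     lies_over (fixed_field G r.+1) o (ordQ u') ->
     exists2 v, (1 <= v <= r.+1)%N & same_place_on (@allE E) o (ordP u' v)) ->
  pole_divisor cst (ordP 0%N) (iota 1 r.+1) z ->
  omega 0%N = 1 ->
  (forall i, (1 <= i <= r.-1)%N -> pole_divisor cst (ordP 0%N) (iota 1 i.+1) (omega i)) ->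
  (forall c : nat -> E, (forall i, (i < r)%N -> fixed_field G r.+1 (c i)) ->
     \sum_(i < r) c i * omega i = 0 -> forall i, (i < r)%N -> c i = 0) ->
  (1 <= t <= s)%N ->
  (1 <= u <= s)%N ->
  (forall f : 'I_r -> 'I_r.+1, injective f -> \det (rowsub f (Mmat evP omega r u)) != 0) ->
  (forall f : 'I_r.-1 -> 'I_r.+1, injective f -> \det (rowsub f (Mmat' evP omega r u)) != 0) ->
  forall (a b : nat -> nat -> K) (S : {set 'I_r.+2}),
    #|S| = r ->
    (forall k, k \in S -> Bvec cst evP evQ z omega r t u a k = Bvec cst evP evQ z omega r t u b k) ->
    forall k, Bvec cst evP evQ z omega r t u a k = Bvec cst evP evQ z omega r t u b k.
Proof.
case: r => [//|n] r2 _ _ [G_aut _ _] [Fz _] Q_rat Q_dist P_over _ _ z_poles omega0 omega_poles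
  _ _ /andP[u_gt0 u_le_s] M_minors M'_minors a b S cardS Bab.
have Qu_neq_Q0 : ~ same_place_on (fixed_field G n.+2) (ordQ u) (ordQ 0%N).
  by apply: Q_dist => //; lia.
have Bvec_lift := Bvec_lift t G_aut Fz u_le_s (ltn0Sn n) Q_rat Qu_neq_Q0 P_over
  z_poles omega0 omega_poles.
have coords_ab : fa_coords t a (evQ u z) n.+1 = fa_coords t b (evQ u z) n.+1.
  apply: (eq_of_ext_rows M_minors _ cardS) => [f f_inj|k kS|maxS].
  - by rewrite -Mmat'E; apply: M'_minors.
  - by rewrite -!Bvec_lift Bab.
  - by rewrite !mxE; have := Bab _ maxS; rewrite !Bvec_max.
move=> k; case: (unliftP ord_max k) => [k' ->|->]; first by rewrite !Bvec_lift coords_ab.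
by rewrite !Bvec_max; have := congr1 (fun v : 'cV_n.+1 => v 0 0) coords_ab; rewrite !mxE.
Qed.
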